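(* Let $R=(r_{i,j})_{i,j=0}^{n-1}$ be a complex Hermitian positive definite matrix, and let $0\le s<d\le n-1$. Let $M={}^0R^{s,d}$ be the $n\times n$ matrix with entries $M_{i,j}=r_{i,j}$ if $s\le i,j\le d$ and $M_{i,j}=0$ otherwise. Then for all $s\le k<l\le d$, the quantities $p^M_{k,l},q^M_{k,l},a^M_{k,l},a'^M_{k,l},v^M_{k,l},v'^M_{k,l}$ obtained by running the generalized reflection coefficient recursion on $M$ are well defined and $$\big(p^M_{k,l},q^M_{k,l},a^M_{k,l},a'^M_{k,l},v^M_{k,l},v'^M_{k,l}\big)=\big(p^R_{k,l},q^R_{k,l},a^R_{k,l},a'^R_{k,l},v^R_{k,l},v'^R_{k,l}\big).$$
   Context: Generalized reflection coefficient recursion for a complex $n\times n$ matrix $M$ (indices $0,\dots,n-1$; $e_0,\dots,e_{n-1}$ the canonical basis column vectors of $\mathbb{C}^n$): set $p^M_{k,k}=q^M_{k,k}=e_k$ for all $k$; define $v^M_{k,l}:=(q^M_{k,l})^TMe_l$ and $v'^M_{k,l}:=(p^M_{k,l})^TMe_k$; and for $0\le k<l\le n-1$, recursively in $l-k$, $a^M_{k,l}=\dfrac{(p^M_{k,l-1})^TMe_l}{v^M_{k+1,l}}$, $a'^M_{k,l}=\dfrac{(q^M_{k+1,l})^TMe_k}{v'^M_{k,l-1}}$, $p^M_{k,l}=p^M_{k,l-1}-a^M_{k,l}q^M_{k+1,l}$, $q^M_{k,l}=q^M_{k+1,l}-a'^M_{k,l}p^M_{k,l-1}$ (the quantities are well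 defined when the denominators involved are nonzero; for Hermitian positive definite $M$ they are positive reals). The superscript $R$ denotes the same quantities computed for $M=R$. *)

From HB Require Import structures.
From mathcomp Require Import all_boot all_order all_algebra.
From mathcomp Require Import complex.
From mathcomp Require Import reals.
Set Implicit Arguments. Unset Strict Implicit. Unset Printing Implicit Defensive.
Import Order.TTheory GRing.Theory Num.Theory.
Local Open Scope ring_scope.

Section GRC.
Variable C : numClosedFieldType.
Variable n : nat.

Definition evec (k : nat) : 'cV[C]_n := \col_(i < n) ((i : nat) == k)%:R.

Definition bil (x : 'cV[C]_n) (M : 'M[C]_n) (y : 'cV[C]_n) : C :=
  (x^T *m M *m y) 0 0.

(* pq M dd k = (p^M_{k,k+dd}, q^M_{k,k+dd}), defined by recursion on dd = l - k.
   Division is MathComp's total division (x / 0 = 0); well-definedness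
   (nonzero denominators) is asserted separately in the theorem. *)
Fixpoint pq (M : 'M[C]_n) (dd k : nat) : 'cV[C]_n * 'cV[C]_n :=
  match dd with
  | 0 => (evec k, evec k)
  | dd'.+1 =>
      let l := (k + dd'.+1)%N in
      let p1 := (pq M dd' k).1 in        (* p_{k,l-1} *)
      let q2 := (pq M dd' k.+1).2 in     (* q_{k+1,l} *)
      let a  := bil p1 M (evec l) / bil q2 M (evec l) in
      let a' := bil q2 M (evec k) / bil p1 M (evec k) in
      (p1 - a *: q2, q2 - a' *: p1)
  end.

Definition rc_p (M : 'M[C]_n) (k l : nat) : 'cV[C]_n := (pq M (l - k) k).1.
Definition rc_q (M : 'M[C]_n) (k l : nat) : 'cV[C]_n := (pq M (l - k) k).2.
Definition rc_v (M : 'M[C]_n) (k l : nat) : C := bil (rc_q M k l) M (evec l).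
Definition rc_v' (M : 'M[C]_n) (k l : nat) : C := bil (rc_p M k l) M (evec k).
Definition rc_a (M : 'M[C]_n) (k l : nat) : C :=
  bil (rc_p M k l.-1) M (evec l) / rc_v M k.+1 l.
Definition rc_a' (M : 'M[C]_n) (k l : nat) : C :=
  bil (rc_q M k.+1 l) M (evec k) / rc_v' M k l.-1.

Definition rc_step_defined (M : 'M[C]_n) (k l : nat) : Prop :=
  rc_v M k.+1 l != 0 /\ rc_v' M k l.-1 != 0.

Definition is_hermitian_mx (A : 'M[C]_n) : Prop :=
  forall i j : 'I_n, A j i = (A i j)^*.

Definition is_posdef_mx (A : 'M[C]_n) : Prop :=
  forall x : 'cV[C]_n, x != 0 -> 0 < ((map_mx Num.conj x)^T *m A *m x) 0 0.

Definition trunc_mx (A : 'M[C]_n) (s d : nat) : 'M[C]_n :=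
  \matrix_(i < n, j < n)
    if [&& (s <= i)%N, (i <= d)%N, (s <= j)%N & (j <= d)%N] then A i j else 0.

End GRC.

From HB Require Import structures.
From mathcomp Require Import all_boot all_order all_algebra.
From mathcomp Require Import complex.
From mathcomp Require Import reals.
From mathcomp Require Import zify.
Set Implicit Arguments. Unset Strict Implicit. Unset Printing Implicit Defensive.
Import Order.TTheory GRing.Theory Num.Theory.
Local Open Scope ring_scope.

(* By induction on [l - k], [p_{k,l}] and [q_{k,l}] are supported on [[k, l]],
   have entry 1 at [k] resp. [l], and are M-orthogonal to [e_j] for [k < j <= l]
   resp. [k <= j < l] (the coefficients [a], [a'] are chosen to kill exactly the
   new term).  For such a vector [x] with pivot [c], [x^T M conj(x)] reduces to
   [(x^T M e_c) conj(x_c)], so positive definiteness alone makes every [v], [v'] nonzero.  Finally a vector supported on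
   [[s, d]] sees only the block of [M] indexed by [[s, d]], so truncating [R] to
   that block changes none of the quantities with [s <= k < l <= d]. *)

Section ReflectionCoefficients.
Variable C : numClosedFieldType.
Variable n : nat.

Lemma evecE j (i : 'I_n) (k : 'I_1) : evec C n j i k = ((i : nat) == j)%:R.
Proof. exact: mxE. Qed.

Lemma evec_out j : (n <= j)%N -> evec C n j = 0.
Proof.
move=> nj; apply/matrixP => i k; rewrite evecE mxE.
by case: eqP => // ij; move: (ltn_ord i); lia.
Qed.

Lemma bil_evec (x : 'cV[C]_n) (M : 'M[C]_n) (j : 'I_n) :
  bil x M (evec C n j) = (x^T *m M) 0 j.
Proof.
rewrite /bil mxE (bigD1 j) //= big1 => [|i ji]; last first.
  by have /negbTE ij : (i : nat) != j := ji; rewrite evecE ij mulr0.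
by rewrite evecE eqxx mulr1 addr0.
Qed.

Lemma bilBl (x y z : 'cV[C]_n) a (M : 'M[C]_n) :
  bil (x - a *: y) M z = bil x M z - a * bil y M z.
Proof. by rewrite /bil linearB linearZ /= !mulmxBl -!scalemxAl !mxE. Qed.

Lemma bil_sum_evec (x y : 'cV[C]_n) (M : 'M[C]_n) :
  bil x M y = \sum_(j < n) bil x M (evec C n j) * y j 0.
Proof. by rewrite {1}/bil mxE; apply: eq_bigr => j _; rewrite bil_evec. Qed.

Definition supp_in (x : 'cV[C]_n) (a b : nat) : Prop :=
  forall i : 'I_n, ((i < a) || (b < i))%N -> x i 0 = 0.

Lemma supp_inW x a b a' b' :
  (a' <= a)%N -> (b <= b')%N -> supp_in x a b -> supp_in x a' b'.
Proof. by move=> ha hb sx i hi; apply: sx; lia. Qed.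

Lemma pq_supp (M : 'M[C]_n) dd k :
  supp_in (pq M dd k).1 k (k + dd)%N /\ supp_in (pq M dd k).2 k (k + dd)%N.
Proof.
elim: dd k => [|dd IH] k /=.
  by rewrite addn0; split=> i hi; rewrite evecE; case: eqP => // ei; lia.
have [sp _] := IH k; have [_ sq] := IH k.+1.
by split=> i hi; rewrite !mxE (sp i) ?(sq i) ?mulr0 ?subr0 //; lia.
Qed.

Lemma pq1_pivot (M : 'M[C]_n) dd k (i : 'I_n) :
  i = k :> nat -> (pq M dd k).1 i 0 = 1.
Proof.
move=> ik; elim: dd => [|dd IH] /=; first by rewrite evecE ik eqxx.
have [_ sq] := pq_supp M dd k.+1.
by rewrite !mxE IH (sq i) ?mulr0 ?subr0 //; lia.
Qed.

Lemma pq2_pivot (M : 'M[C]_n) dd k (i : 'I_n) :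
  i = (k + dd)%N :> nat -> (pq M dd k).2 i 0 = 1.
Proof.
elim: dd k => [|dd IH] k ik /=; first by rewrite evecE ik addn0 eqxx.
have [sp _] := pq_supp M dd k.
by rewrite !mxE IH ?addSnnS // (sp i) ?mulr0 ?subr0 //; lia.
Qed.

Lemma rc_supp (M : 'M[C]_n) k l :
  (k <= l)%N -> supp_in (rc_p M k l) k l /\ supp_in (rc_q M k l) k l.
Proof. by move=> kl; have := pq_supp M (l - k) k; rewrite subnKC. Qed.

Section PositiveDefinite.
Variable M : 'M[C]_n.
Hypothesis pdM : is_posdef_mx M.

Lemma bil_pivot_neq0 (x : 'cV[C]_n) a b (c : 'I_n) :
  supp_in x a b -> x c 0 = 1 ->
  (forall j, (a <= j <= b)%N -> j != c -> bil x M (evec C n j) = 0) ->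
  bil x M (evec C n c) != 0.
Proof.
move=> sx xc orth; set u := map_mx Num.conj x.
have u_neq0 : u != 0.
  apply: contraTneq isT => /matrixP/(_ c 0).
  by rewrite !mxE xc conjC1 => /eqP; rewrite oner_eq0.
have := pdM u_neq0.
have -> : map_mx Num.conj u = x by apply/matrixP => i j; rewrite !mxE conjCK.
rewrite -/(bil x M u) bil_sum_evec (bigD1 c) //= big1 => [|j jc]; last first.
  have [hj|hj] := boolP (a <= j <= b)%N; first by rewrite orth ?mul0r.
  by rewrite mxE sx ?conjC0 ?mulr0 //; lia.
by rewrite addr0 mxE xc conjC1 mulr1 => /gt_eqF ->.
Qed.

Definition pq_orthogonal dd k : Prop :=
  (forall j, (k < j <= k + dd)%N -> bil (pq M dd k).1 M (evec C n j) = 0) /\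
  (forall j, (k <= j < k + dd)%N -> bil (pq M dd k).2 M (evec C n j) = 0).

Lemma pq_pivot_neq0 dd k : (k + dd < n)%N -> pq_orthogonal dd k ->
  bil (pq M dd k).1 M (evec C n k) != 0 /\
  bil (pq M dd k).2 M (evec C n (k + dd)) != 0.
Proof.
move=> ln [op oq]; have kn : (k < n)%N by lia.
have [sp sq] := pq_supp M dd k; split.
- apply: (@bil_pivot_neq0 _ k (k + dd) (Ordinal kn)) sp _ _; first exact: pq1_pivot.
  by move=> j hj jk; apply: op; move: jk => /=; lia.
- apply: (@bil_pivot_neq0 _ k (k + dd) (Ordinal ln)) sq _ _; first exact: pq2_pivot.
  by move=> j hj jl; apply: oq; move: jl => /=; lia.
Qed.

Lemma pq_orth dd k : (k + dd < n)%N -> pq_orthogonal dd k.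
Proof.
elim: dd k => [|dd IH] k ln; first by split=> j hj; lia.
have ln0 : (k + dd < n)%N by lia.
have ln1 : (k.+1 + dd < n)%N by rewrite addSnnS.
have orth0 := IH k ln0; have orth1 := IH k.+1 ln1.
have [[op _] [_ oq]] := (orth0, orth1).
have [vp_neq0 _] := pq_pivot_neq0 ln0 orth0.
have [_ vq_neq0] := pq_pivot_neq0 ln1 orth1; rewrite addSnnS in vq_neq0.
split=> j hj /=; rewrite bilBl.
- have [->|jl] := eqVneq j (k + dd.+1)%N; first by rewrite divfK ?subrr.
  by rewrite (op j) ?(oq j) ?mulr0 ?subr0 //; move: jl; lia.
- have [->|jk] := eqVneq j k; first by rewrite divfK ?subrr.
  by rewrite (oq j) ?(op j) ?mulr0 ?subr0 //; move: jk; lia.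
Qed.

Lemma rc_v_neq0 k l :
  (k <= l)%N -> (l < n)%N -> rc_v M k l != 0 /\ rc_v' M k l != 0.
Proof.
move=> kl ln; have ln' : (k + (l - k) < n)%N by rewrite subnKC.
have [vp_neq0 vq_neq0] := pq_pivot_neq0 ln' (pq_orth ln').
by rewrite subnKC // in vq_neq0; split.
Qed.

End PositiveDefinite.

Section Truncation.
Variables (R : 'M[C]_n) (s d : nat).
Local Notation M := (trunc_mx R s d).

Lemma bil_trunc_mx x j : supp_in x s d -> (s <= j <= d)%N ->
  bil x M (evec C n j) = bil x R (evec C n j).
Proof.
move=> sx hj; have [jn|nj] := ltnP j n; last by rewrite evec_out // /bil !mulmx0.
rewrite -[j]/(val (Ordinal jn)) !bil_evec !mxE; apply: eq_bigr => i _.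
rewrite !mxE /=; case: ifP => // hi.
by rewrite sx ?mul0r //; move: hi; lia.
Qed.

Lemma pq_trunc_mx dd k : (s <= k)%N -> (k + dd <= d)%N -> pq M dd k = pq R dd k.
Proof.
elim: dd k => [|dd IH] k hs hd //=.
rewrite IH ?IH //; try lia.
have [sp _] := pq_supp R dd k; have [_ sq] := pq_supp R dd k.+1.
have sp' : supp_in (pq R dd k).1 s d by apply: supp_inW sp; lia.
have sq' : supp_in (pq R dd k.+1).2 s d by apply: supp_inW sq; lia.
by rewrite !bil_trunc_mx //; lia.
Qed.

Lemma rc_pq_trunc_mx k l : (s <= k)%N -> (k <= l)%N -> (l <= d)%N ->
  rc_p M k l = rc_p R k l /\ rc_q M k l = rc_q R k l.
Proof. by move=> sk kl ld; rewrite /rc_p /rc_q pq_trunc_mx ?subnKC. Qed.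

Lemma bil_rc_trunc_mx k l j :
  (s <= k)%N -> (k <= l)%N -> (l <= d)%N -> (s <= j <= d)%N ->
  bil (rc_p M k l) M (evec C n j) = bil (rc_p R k l) R (evec C n j) /\
  bil (rc_q M k l) M (evec C n j) = bil (rc_q R k l) R (evec C n j).
Proof.
move=> sk kl ld sjd; have [-> ->] := rc_pq_trunc_mx sk kl ld.
have [sp sq] := rc_supp R kl.
by rewrite !bil_trunc_mx //; [apply: supp_inW sq | apply: supp_inW sp].
Qed.

Lemma rc_v_trunc_mx k l : (s <= k)%N -> (k <= l)%N -> (l <= d)%N ->
  rc_v M k l = rc_v R k l /\ rc_v' M k l = rc_v' R k l.
Proof.
move=> sk kl ld; rewrite /rc_v /rc_v'.
have [sld skd] : (s <= l <= d)%N /\ (s <= k <= d)%N by lia.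
have [_ ->] := bil_rc_trunc_mx sk kl ld sld.
by have [-> _] := bil_rc_trunc_mx sk kl ld skd.
Qed.

Lemma rc_a_trunc_mx k l : (s <= k)%N -> (k < l)%N -> (l <= d)%N ->
  rc_a M k l = rc_a R k l /\ rc_a' M k l = rc_a' R k l.
Proof.
move=> sk kl ld; rewrite /rc_a /rc_a'.
have sk1 : (s <= k.+1)%N by lia.
have kl1 : (k <= l.-1)%N by lia.
have l1d : (l.-1 <= d)%N by lia.
have [sld skd] : (s <= l <= d)%N /\ (s <= k <= d)%N by lia.
have [-> _] := bil_rc_trunc_mx sk kl1 l1d sld.
have [_ ->] := bil_rc_trunc_mx sk1 kl ld skd.
have [-> _] := rc_v_trunc_mx sk1 kl ld.
by have [_ ->] := rc_v_trunc_mx sk kl1 l1d.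
Qed.

End Truncation.
End ReflectionCoefficients.

Theorem mainTheorem2 (Rr : realType) (n : nat) (R : 'M[complex Rr]_n) (s d : nat)
  (hR : is_hermitian_mx R) (pdR : is_posdef_mx R) (hsd : (s < d)%N) (hdn : (d < n)%N) :
  let M := trunc_mx R s d in
  forall k l : nat, (s <= k)%N -> (k < l)%N -> (l <= d)%N ->
    rc_step_defined M k l /\
    (rc_p M k l = rc_p R k l /\ rc_q M k l = rc_q R k l /\
     rc_a M k l = rc_a R k l /\ rc_a' M k l = rc_a' R k l /\
     rc_v M k l = rc_v R k l /\ rc_v' M k l = rc_v' R k l).
Proof.
move=> M k l sk kl ld.
have sk1 : (s <= k.+1)%N by lia.
have kl1 : (k <= l.-1)%N by lia.
have l1d : (l.-1 <= d)%N by lia.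
have [pM qM] := rc_pq_trunc_mx R sk (ltnW kl) ld.
have [vM v'M] := rc_v_trunc_mx R sk (ltnW kl) ld.
have [aM a'M] := rc_a_trunc_mx R sk kl ld.
have [v1M _] := rc_v_trunc_mx R sk1 kl ld.
have [_ v'1M] := rc_v_trunc_mx R sk kl1 l1d.
have [v1R_neq0 _] := rc_v_neq0 pdR kl (leq_ltn_trans ld hdn).
have [_ v'1R_neq0] := rc_v_neq0 pdR kl1 (leq_ltn_trans l1d hdn).
by rewrite /rc_step_defined v1M v'1M.
Qed.
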